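(* Let $\sigma$ be a signature and let $\mathcal K$ be a nonempty class of causal teams over $\sigma$ (respectively, a nonempty class of generalized causal teams over $\sigma$). Then there is a $\mathcal{CO}[\sigma]$-formula $\varphi$ with $\mathcal K=\{T \text{ over } \sigma : T\models\varphi\}$ (satisfaction $\models^c$, respectively $\models^g$) if and only if $\mathcal K$ is flat and closed under equivalence.
   Context: A signature $\sigma=(\mathrm{Dom},\mathrm{Ran})$: $\mathrm{Dom}$ is a nonempty finite set of variables and each $X\in\mathrm{Dom}$ has a nonempty finite range $\mathrm{Ran}(X)$. For a sequence $\mathbf X=\langle X_1,\dots,X_n\rangle$, $\mathrm{Ran}(\mathbf X)=\mathrm{Ran}(X_1)\times\dots\times\mathrm{Ran}(X_n)$; for $\mathbf x\in\mathrm{Ran}(\mathbf X)$, $\mathbf X=\mathbf x$ abbreviates $X_1=x_1\wedge\dots\wedge X_n=x_n$; it is inconsistent if it contains conjuncts $X=x$, $X=x'$ with $x\neq x'$, consistent otherwise. $\mathcal{CO}[\sigma]$-formulas: $\alpha::=X=x\mid\neg\alpha\mid\alpha\wedge\alpha\mid\alpha\vee\alpha\mid\mathbf X=\mathbf x\;\Box\!\!\rightarrow\alpha$ (with $x\in\mathrm{Ran}(X)$, $\mathbf x\in\mathrm{Ran}(\mathbf X)$). An assignment is a map $s$ on $\mathrm{Dom}$ with $s(X)\in\mathrm{Ran}(X)$; $\mathbb A_\sigma$ is the set of assignments. A system of functions $\mathcal F$ assigns to each $V$ in a set $\mathrm{En}(\mathcal F)\subseteq\mathrm{Dom}$ a set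 $PA^{\mathcal F}_V\subseteq\mathrm{Dom}\setminus\{V\}$ and a function $\mathcal F_V:\mathrm{Ran}(PA^{\mathcal F}_V)\to\mathrm{Ran}(V)$; $\mathrm{Ex}(\mathcal F)=\mathrm{Dom}\setminus\mathrm{En}(\mathcal F)$. Only recursive systems (the graph with edges $X\to Y$ iff $X\in PA^{\mathcal F}_Y$ is acyclic) are considered; $\mathbb F_\sigma$ is the finite set of them. $s$ is compatible with $\mathcal F$ if $s(V)=\mathcal F_V(s(PA^{\mathcal F}_V))$ for all $V\in\mathrm{En}(\mathcal F)$; $\mathbb S_\sigma$ is the set of pairs $(s,\mathcal F)\in\mathbb A_\sigma\times\mathbb F_\sigma$ with $s$ compatible with $\mathcal F$. For consistent $\mathbf X=\mathbf x$: $\mathcal F_{\mathbf X=\mathbf x}$ is the restriction of $\mathcal F$ to $\mathrm{En}(\mathcal F)\setminus\mathbf X$, and $s^{\mathcal F}_{\mathbf X=\mathbf x}$ is defined recursively by $X_i\mapsto x_i$, $V\mapsto s(V)$ for $V\in\mathrm{Ex}(\mathcal F)\setminus\mathbf X$, $V\mapsto\mathcal F_V(s^{\mathcal F}_{\mathbf X=\mathbf x}(PA^{\mathcal F}_V))$ for $V\in\mathrm{En}(\mathcal F)\setminus\mathbf X$. A causal team is $T=(T^-,\mathcal F)$ with $\mathcal F\in\mathbb F_\sigma$ and $T^-\subseteq\mathbb A_\sigma$ consisting of assignments compatible with $\mathcal F$; all causal teams with empty team component are identified as the empty causal team $\emptyset$. $(S^-,\mathcal G)$ is a causal subteam of $(T^-,\mathcal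 F)$ if $S^-\subseteq T^-$ and $\mathcal G=\mathcal F$ ($\emptyset$ is a causal subteam of every causal team). $T_{\mathbf X=\mathbf x}=(\{s^{\mathcal F}_{\mathbf X=\mathbf x}:s\in T^-\},\mathcal F_{\mathbf X=\mathbf x})$. Satisfaction $\models^c$: $T\models X=x$ iff $s(X)=x$ for all $s\in T^-$; $T\models\neg\alpha$ iff $(\{s\},\mathcal F)\not\models\alpha$ for all $s\in T^-$; $\wedge$ as usual; $T\models\varphi\vee\psi$ iff there are causal subteams $T_1,T_2$ of $T$ with $T_1^-\cup T_2^-=T^-$, $T_1\models\varphi$, $T_2\models\psi$; $T\models\mathbf X=\mathbf x\;\Box\!\!\rightarrow\varphi$ iff $\mathbf X=\mathbf x$ is inconsistent or $T_{\mathbf X=\mathbf x}\models\varphi$. A generalized causal team is a set $T\subseteq\mathbb S_\sigma$; $T^-=\{s:(s,\mathcal F)\in T\text{ for some }\mathcal F\}$; causal subteams are subsets, unions are set unions; $T_{\mathbf X=\mathbf x}=\{(s^{\mathcal F}_{\mathbf X=\mathbf x},\mathcal F_{\mathbf X=\mathbf x}):(s,\mathcal F)\in T\}$. Satisfaction $\models^g$ has the same clauses except $T\models\neg\alpha$ iff $\{(s,\mathcal F)\}\not\models\alpha$ for all $(s,\mathcal F)\in T$, and $T\models\varphi\vee\psi$ iff $T=T_1\cup T_2$ with $T_1\models\varphi$, $T_2\models\psi$. Equivalence: $\mathrm{Cn}(\mathcal F)$ is the set of $V\in\mathrm{En}(\mathcal F)$ with $\mathcal F_V$ constant. $\mathcal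 F_V\sim\mathcal G_V$ means $\mathcal F_V(\mathbf x\mathbf y)=\mathcal G_V(\mathbf x\mathbf z)$ for all $\mathbf x\in\mathrm{Ran}(PA^{\mathcal F}_V\cap PA^{\mathcal G}_V)$, $\mathbf y\in\mathrm{Ran}(PA^{\mathcal F}_V\setminus PA^{\mathcal G}_V)$, $\mathbf z\in\mathrm{Ran}(PA^{\mathcal G}_V\setminus PA^{\mathcal F}_V)$. $\mathcal F\sim\mathcal G$ iff $\mathrm{En}(\mathcal F)\setminus\mathrm{Cn}(\mathcal F)=\mathrm{En}(\mathcal G)\setminus\mathrm{Cn}(\mathcal G)$ and $\mathcal F_V\sim\mathcal G_V$ for all $V$ in this set. Nonempty causal teams $(T^-,\mathcal F),(S^-,\mathcal G)$ are equivalent ($\approx$) iff $\mathcal F\sim\mathcal G$ and $T^-=S^-$. For a generalized causal team $T$, $T^{\mathcal F}=\{(s,\mathcal G)\in T:\mathcal G\sim\mathcal F\}$; generalized causal teams $S,T$ are equivalent iff $(S^{\mathcal F})^-=(T^{\mathcal F})^-$ for all $\mathcal F\in\mathbb F_\sigma$. A class $\mathcal K$ is closed under equivalence if $T\in\mathcal K$ and $T\approx S$ imply $S\in\mathcal K$. It is flat if: for causal teams, $(T^-,\mathcal F)\in\mathcal K$ iff $(\{s\},\mathcal F)\in\mathcal K$ for all $s\in T^-$; for generalized causal teams, $T\in\mathcal K$ iff $\{(s,\mathcal F)\}\in\mathcal K$ for all $(s,\mathcal F)\in T$. *)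

From HB Require Import structures.
From mathcomp Require Import all_boot.
Set Implicit Arguments.
Unset Strict Implicit.
Unset Printing Implicit Defensive.

Section CausalTeams.

(* A signature sigma = (Dom, Ran): variables form the finite type V, all
   values live in a common finite type D, and Ran X : {set D} is the range
   of X.  Nonemptiness of Dom and of each range is a hypothesis of the
   theorem. *)
Variables (V D : finType) (Ran : V -> {set D}).

Definition assignment := {f : {ffun V -> D} | [forall X, f X \in Ran X]}.

(* Raw systems of functions: parent sets PA and, for each variable, either
   None (exogenous) or Some f, where f : assignments -> D encodes
   F_V : Ran(PA_V) -> Ran(V) (f must depend only on the PA_V-coordinates). *)
Definition sysraw :=
  ({ffun V -> {set V}} * {ffun V -> option {ffun assignment -> D}})%type.

Definition PA (F : sysraw) (X : V) : {set V} := F.1 X.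
Definition fn (F : sysraw) (X : V) : option {ffun assignment -> D} := F.2 X.

Definition En (F : sysraw) : {set V} := [set X | fn F X].

Definition edge (F : sysraw) : rel V := fun X Y => X \in PA F Y.

Definition sys_wf (F : sysraw) : bool :=
  [forall X, (X \notin En F) ==> (PA F X == set0)] &&
  [forall X, X \notin PA F X] &&
  [forall X, if fn F X is Some f then
               [forall s : assignment, f s \in Ran X] &&
               [forall s : assignment, forall t : assignment,
                  [forall Y in PA F X, val s Y == val t Y] ==> (f s == f t)]
             else true] &&
  [forall X, forall Y, edge F X Y ==> ~~ connect (edge F) Y X].

Definition compatible (s : assignment) (F : sysraw) : bool :=
  [forall X, if fn F X is Some f then val s X == f s else true].

Definition ivars (xs : seq (V * D)) : seq V := [seq p.1 | p <- xs].

Definition consistent (xs : seq (V * D)) : bool :=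
  all (fun p => all (fun q => (p.1 == q.1) ==> (p.2 == q.2)) xs) xs.

(* the value assigned to Y by xs (meaningful when Y occurs in xs) *)
Definition ival (xs : seq (V * D)) (Y : V) (d : D) : D :=
  (nth (Y, d) xs (find (fun p => p.1 == Y) xs)).2.

Definition sys_interv (F : sysraw) (xs : seq (V * D)) : sysraw :=
  ([ffun Y => if Y \in ivars xs then set0 else PA F Y],
   [ffun Y => if Y \in ivars xs then None else fn F Y]).

Definition interv_eqs (F : sysraw) (xs : seq (V * D)) (s t : assignment) : bool :=
  [forall Y, if Y \in ivars xs then val t Y == ival xs Y (val s Y)
             else if fn F Y is Some f then val t Y == f t
             else val t Y == val s Y].

(* s^F_{X=x}: the assignment satisfying the recursive clauses (it exists
   and is unique for recursive F and consistent xs with values in range) *)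
Definition asg_interv (F : sysraw) (xs : seq (V * D)) (s : assignment)
  : assignment :=
  odflt s [pick t | interv_eqs F xs s t].

Inductive formula : Type :=
  | Atom of V & D
  | Neg of formula
  | And of formula & formula
  | Or of formula & formula
  | Cf of seq (V * D) & formula.

Fixpoint wff (phi : formula) : bool :=
  match phi with
  | Atom X x => x \in Ran X
  | Neg a => wff a
  | And a b => wff a && wff b
  | Or a b => wff a && wff b
  | Cf xs a => (0 < size xs) && all (fun p => p.2 \in Ran p.1) xs && wff a
  end.

Definition cteam_wf (T : {set assignment}) (F : sysraw) : Prop :=
  sys_wf F /\ forall s, s \in T -> compatible s F.

Fixpoint csat (phi : formula) (T : {set assignment}) (F : sysraw) : Prop :=
  match phi with
  | Atom X x => forall s, s \in T -> val s X = x
  | Neg a => forall s, s \in T -> ~ csat a [set s] F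
  | And a b => csat a T F /\ csat b T F
  | Or a b => exists T1 T2 : {set assignment},
      [/\ T1 \subset T, T2 \subset T, T1 :|: T2 = T, csat a T1 F & csat b T2 F]
  | Cf xs a => ~~ consistent xs \/
      csat a [set asg_interv F xs s | s in T] (sys_interv F xs)
  end.

Definition gteam_wf (T : {set (assignment * sysraw)}) : Prop :=
  forall p, p \in T -> sys_wf p.2 /\ compatible p.1 p.2.

Fixpoint gsat (phi : formula) (T : {set (assignment * sysraw)}) : Prop :=
  match phi with
  | Atom X x => forall p, p \in T -> val p.1 X = x
  | Neg a => forall p, p \in T -> ~ gsat a [set p]
  | And a b => gsat a T /\ gsat b T
  | Or a b => exists T1 T2 : {set (assignment * sysraw)},
      [/\ T1 :|: T2 = T, gsat a T1 & gsat b T2]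
  | Cf xs a => ~~ consistent xs \/
      gsat a [set (asg_interv p.2 xs p.1, sys_interv p.2 xs) | p in T]
  end.

Definition Cn (F : sysraw) : {set V} :=
  [set X | if fn F X is Some f then [forall s : assignment, forall t : assignment, f s == f t] else false].

Definition fn_sim (F G : sysraw) (X : V) : bool :=
  match fn F X, fn G X with
  | Some f, Some g =>
      [forall s : assignment, forall t : assignment,
         [forall Y in PA F X :&: PA G X, val s Y == val t Y] ==> (f s == g t)]
  | _, _ => false
  end.

Definition sys_equiv (F G : sysraw) : bool :=
  (En F :\: Cn F == En G :\: Cn G) &&
  [forall X in En F :\: Cn F, fn_sim F G X].

Definition proj (T : {set (assignment * sysraw)}) : {set assignment} :=
  [set p.1 | p in T].

Definition restr (T : {set (assignment * sysraw)}) (F : sysraw) :=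
  [set p in T | sys_equiv p.2 F].

Definition gequiv (S T : {set (assignment * sysraw)}) : Prop :=
  forall F, sys_wf F -> proj (restr S F) = proj (restr T F).

(* a class of causal teams over sigma (empty causal teams identified) *)
Definition cclass (K : {set assignment} -> sysraw -> Prop) : Prop :=
  (forall T F, K T F -> cteam_wf T F) /\
  (forall F G, cteam_wf set0 F -> cteam_wf set0 G -> K set0 F -> K set0 G).

Definition cflat (K : {set assignment} -> sysraw -> Prop) : Prop :=
  forall T F, cteam_wf T F -> (K T F <-> forall s, s \in T -> K [set s] F).

Definition cclosed (K : {set assignment} -> sysraw -> Prop) : Prop :=
  forall T F S G, cteam_wf T F -> cteam_wf S G ->
    T != set0 -> S != set0 -> sys_equiv F G -> T = S -> K T F -> K S G.

Definition gclass (K : {set (assignment * sysraw)} -> Prop) : Prop :=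
  forall T, K T -> gteam_wf T.

Definition gflat (K : {set (assignment * sysraw)} -> Prop) : Prop :=
  forall T, gteam_wf T -> (K T <-> forall p, p \in T -> K [set p]).

Definition gclosed (K : {set (assignment * sysraw)} -> Prop) : Prop :=
  forall T S, gteam_wf T -> gteam_wf S -> gequiv T S -> K T -> K S.

End CausalTeams.

(* Every formula is flat, and on a singleton team its truth depends only on the
   assignment and on the system up to equivalence: equivalent systems give every
   variable the same response to every input, since a constant mechanism agrees with
   any compatible assignment.  Conversely, the conjunction [chi s F] of the atoms of
   [s] with the counterfactuals "were all variables but X as in w, X would be F_X(w)"
   holds at a singleton (t, G) exactly when t = s and G ~ F; so a flat class closed
   under equivalence is defined by the disjunction of [chi s F] over its singletons. *)

From HB Require Import structures.
From mathcomp Require Import all_boot boolp.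

Set Implicit Arguments.
Unset Strict Implicit.
Unset Printing Implicit Defensive.

(** * Flat properties of teams *)

Section Flatness.
Variable T : finType.

Definition flat (P : {set T} -> Prop) : Prop :=
  forall S, P S <-> (forall x, x \in S -> P [set x]).

Lemma forall_in_iff (S : {set T}) (P Q : T -> Prop) : {in S, forall x, P x <-> Q x} ->
  (forall x, x \in S -> P x) <-> (forall x, x \in S -> Q x).
Proof. by move=> PQ; split=> H x xS; apply/(PQ x xS)/H. Qed.

Lemma flat_ext P Q : (forall S, P S <-> Q S) -> flat P -> flat Q.
Proof. by move=> PQ fP S; rewrite -PQ fP; split=> H x /H /PQ. Qed.

Lemma flat0 P : flat P -> P set0.
Proof. by move=> /(_ set0) -> x; rewrite inE. Qed.

Lemma flat_pointwise (Q : T -> Prop) : flat (fun S => forall x, x \in S -> Q x).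
Proof.
move=> S; split=> [H x xS y /set1P -> | H x xS]; first exact: H.
exact: (H x xS x (set11 x)).
Qed.

Lemma flat_and P Q : flat P -> flat Q -> flat (fun S => P S /\ Q S).
Proof.
move=> fP fQ S; rewrite fP fQ.
by split=> [[HP HQ] x xS | H]; [split; [apply: HP | apply: HQ] | split=> x /H[]].
Qed.

Lemma flat_orb (b : bool) P : flat P -> flat (fun S => b \/ P S).
Proof.
case: b => fP S; first by split=> *; left.
rewrite fP; split=> [[] // H x /H | H]; first by right.
by right=> x /H[].
Qed.

Definition splits (P Q : {set T} -> Prop) (S : {set T}) : Prop :=
  exists S1 S2, [/\ S1 :|: S2 = S, P S1 & Q S2].

Lemma splits_set1 P Q x : flat P -> flat Q ->
  splits P Q [set x] <-> P [set x] \/ Q [set x].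
Proof.
move=> fP fQ; split=> [[S1 [S2 [U PS1 QS2]]] | [Px | Qx]].
- have : x \in S1 :|: S2 by rewrite U set11.
  by case/setUP=> [/((fP S1).1 PS1) | /((fQ S2).1 QS2)]; [left | right].
- by exists [set x], set0; rewrite setU0; split=> //; apply: flat0.
- by exists set0, [set x]; rewrite set0U; split=> //; apply: flat0.
Qed.

(* The split is read off pointwise: a point goes left iff its singleton satisfies P. *)
Lemma flat_splits P Q : flat P -> flat Q -> flat (splits P Q).
Proof.
move=> fP fQ S; split=> [[S1 [S2 [<- PS1 QS2]]] x xS | H].
  apply/splits_set1 => //.
  by case/setUP: xS => [/((fP S1).1 PS1) | /((fQ S2).1 QS2)]; [left | right].
exists [set x in S | `[< P [set x] >]], [set x in S | ~~ `[< P [set x] >]]; split.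
- by apply/setP=> x; rewrite !inE -andb_orr orbN andbT.
- by apply/fP=> x; rewrite inE => /andP[_ /asboolP].
- apply/fQ=> x; rewrite inE => /andP[xS /asboolP nPx].
  by case/(splits_set1 _ fP fQ): (H x xS).
Qed.

End Flatness.

Lemma flat_imset (T U : finType) (f : T -> U) (P : {set U} -> Prop) :
  flat P -> flat (fun S => P (f @: S)).
Proof.
move=> fP S; rewrite fP; split=> [H x xS | H _ /imsetP[x xS ->]].
  by apply/fP => _ /imsetP[y /set1P -> ->]; apply/H/imset_f.
by have /fP := H x xS; apply; rewrite imset_set1 set11.
Qed.

Section Definability.
Variables (V D : finType) (Ran : V -> {set D}).
Local Notation asg := (assignment Ran).
Local Notation sys := (sysraw Ran).
Local Notation form := (formula V D).

Lemma csat_Or a b T (F : sys) :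
  csat (Or a b) T F <-> splits (csat a ^~ F) (csat b ^~ F) T.
Proof.
split=> [[T1 [T2 [_ _ U Ha Hb]]] | [T1 [T2 [U Ha Hb]]]]; first by exists T1, T2.
by exists T1, T2; rewrite -U subsetUl subsetUr.
Qed.

Lemma csat_flat (phi : form) (F : sys) : flat (csat phi ^~ F).
Proof.
elim: phi F => [X x|a _|a IHa b IHb|a IHa b IHb|xs a IH] F.
- exact: flat_pointwise.
- exact: flat_pointwise.
- exact: flat_and.
- by apply: flat_ext (flat_splits (IHa F) (IHb F)) => T; rewrite csat_Or.
- exact: (flat_orb (~~ consistent xs) (flat_imset (asg_interv F xs) (IH _))).
Qed.

Lemma gsat_flat (phi : form) : flat (@gsat _ _ Ran phi).
Proof.
elim: phi => [X x|a _|a IHa b IHb|a IHa b IHb|xs a IH].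
- exact: flat_pointwise.
- exact: flat_pointwise.
- exact: flat_and.
- exact: flat_splits.
- exact: (flat_orb (~~ consistent xs) (flat_imset _ IH)).
Qed.

Lemma gsat_set1 (phi : form) (s : asg) (F : sys) :
  gsat phi [set (s, F)] <-> csat phi [set s] F.
Proof.
elim: phi s F => [X x|a IH|a IHa b IHb|a IHa b IHb|xs a IH] s F.
- by split=> H _ /set1P ->; [apply: (H (s, F)) | apply: H]; apply: set11.
- rewrite /=; split=> H _ /set1P ->.
    by rewrite -IH; apply: (H (s, F)); apply: set11.
  by rewrite IH; apply: H; apply: set11.
- by rewrite /= IHa IHb.
- rewrite csat_Or (splits_set1 _ (csat_flat a F) (csat_flat b F)) -IHa -IHb.
  exact: (splits_set1 _ (gsat_flat a) (gsat_flat b)).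
- by rewrite /= !imset_set1 IH.
Qed.

(** * Systems up to equivalence *)

Lemma asg_Ran (a : asg) X : val a X \in Ran X.
Proof. exact: (forallP (valP a) X). Qed.

Lemma PA_neq (F : sys) X Y : sys_wf F -> Y \in PA F X -> Y != X.
Proof.
case/andP=> /andP[/andP[_ /forallP noloop] _] _ YP.
by apply: contraTneq YP => ->; apply: noloop.
Qed.

Lemma fn_Ran (F : sys) X f s : sys_wf F -> fn F X = Some f -> f s \in Ran X.
Proof.
case/andP=> /andP[_ /forallP /(_ X)] + _ eF.
by rewrite eF => /andP[/forallP].
Qed.

Lemma fn_local (F : sys) X f (s t : asg) : sys_wf F -> fn F X = Some f ->
  {in PA F X, forall Y, val s Y = val t Y} -> f s = f t.
Proof.
case/andP=> /andP[_ /forallP /(_ X)] + _ eF st.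
rewrite eF => /andP[_ /forallP /(_ s) /forallP /(_ t) /implyP]; move/(_ _)/eqP; apply.
by apply/forall_inP=> Y /st ->.
Qed.

Lemma compatibleE (s : asg) (F : sys) X f :
  compatible s F -> fn F X = Some f -> val s X = f s.
Proof. by move=> /forallP /(_ X) + eF; rewrite eF => /eqP. Qed.

Definition response (F : sys) (s : asg) Y (t : asg) : D :=
  if fn F Y is Some f then f t else val s Y.

Lemma response_Ran (s : asg) (F : sys) X w : sys_wf F -> response F s X w \in Ran X.
Proof.
by rewrite /response; case eF: (fn F X) => [f|] wF; [apply: fn_Ran eF | apply: asg_Ran].
Qed.

Lemma response_local (s a b : asg) (F : sys) X : sys_wf F ->
  {in PA F X, forall Y, val a Y = val b Y} -> response F s X a = response F s X b.
Proof. by rewrite /response; case eF: (fn F X) => [f|] // wF; apply: fn_local eF. Qed.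

Lemma response_self (s : asg) (F : sys) X : compatible s F -> response F s X s = val s X.
Proof.
by rewrite /response; case eF: (fn F X) => [f|] // cF; rewrite (compatibleE cF eF).
Qed.

Definition patch (A : {set V}) (a b : asg) : asg :=
  insubd a [ffun Y => if Y \in A then val a Y else val b Y].

Lemma patchE A a b Y : val (patch A a b) Y = if Y \in A then val a Y else val b Y.
Proof.
rewrite insubdK ?ffunE //.
by apply/forallP=> Z; rewrite ffunE; case: ifP; rewrite asg_Ran.
Qed.

Lemma fn_simE (F G : sys) X f g : sys_wf F -> sys_wf G ->
  fn F X = Some f -> fn G X = Some g -> fn_sim F G X = (f == g).
Proof.
move=> wF wG eF eG; rewrite /fn_sim eF eG; apply/forallP/eqP=> [fg | fg a].
  apply/ffunP=> a; apply/eqP.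
  by have /forallP/(_ a)/implyP := fg a; apply; apply/forall_inP.
apply/forallP=> b; apply/implyP=> /forall_inP ab.
have -> : f a = f (patch (PA F X) a b).
  by apply: (fn_local wF eF) => Y YF; rewrite patchE YF.
rewrite fg; apply/eqP/(fn_local wG eG) => Y YG; rewrite patchE.
by case: ifP => // YF; apply/eqP/ab; rewrite inE YF.
Qed.

Definition nonconst (F : sys) : {set V} := En F :\: Cn F.

Lemma sys_equivE (F G : sys) : sys_equiv F G =
  (nonconst F == nonconst G) && [forall X in nonconst F, fn_sim F G X].
Proof. by []. Qed.

Definition nonconst_fn (F : sys) X : option {ffun asg -> D} :=
  if X \in nonconst F then fn F X else None.

Lemma nonconstP (F : sys) X :
  reflect (exists2 f, fn F X = Some f & exists a b, f a != f b) (X \in nonconst F).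
Proof.
rewrite !inE; case: (fn F X) => [f|] /=; last by constructor=> -[].
rewrite andbT; apply: (iffP forallPn) => [[a /forallPn[b fab]] | [_ [<-] [a [b fab]]]].
  by exists f => //; exists a, b.
by exists a; apply/forallPn; exists b.
Qed.

Lemma sys_equivP (F G : sys) : sys_wf F -> sys_wf G ->
  reflect (nonconst_fn F =1 nonconst_fn G) (sys_equiv F G).
Proof.
move=> wF wG; rewrite sys_equivE /nonconst_fn.
apply: (iffP andP) => [[/eqP nFG sim] X | EFG].
  rewrite -nFG; case: ifP => // /[dup] XF /(forall_inP sim).
  case/nonconstP: (XF) => f eF _.
  have /nonconstP[g eG _] : X \in nonconst G by rewrite -nFG.
  by rewrite (fn_simE wF wG eF eG) eF eG => /eqP ->.
have nFG : nonconst F = nonconst G.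
  apply/setP=> X; have := EFG X.
  case/boolP: (X \in nonconst F) => [/nonconstP[f -> _] | _];
  case/boolP: (X \in nonconst G) => [/nonconstP[g -> _] | _] //.
split; first exact/eqP.
apply/forall_inP=> X /[dup] XF /nonconstP[f eF _].
have XG : X \in nonconst G by rewrite -nFG.
case/nonconstP: (XG) => g eG _; rewrite (fn_simE wF wG eF eG).
by have := EFG X; rewrite XF XG eF eG => -[->].
Qed.

Lemma sys_equiv_refl (F : sys) : sys_wf F -> sys_equiv F F.
Proof. by move=> wF; apply/sys_equivP. Qed.

Lemma sys_equiv_transl (F G H : sys) : sys_wf F -> sys_wf G -> sys_wf H ->
  sys_equiv F G -> sys_equiv F H = sys_equiv G H.
Proof.
move=> wF wG wH /(sys_equivP wF wG) FG.
by apply/sys_equivP/sys_equivP=> // e X; rewrite -e ?FG.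
Qed.

Lemma nonconst_fn_Some (F : sys) X f :
  nonconst_fn F X = Some f -> exists a b, f a != f b.
Proof. by rewrite /nonconst_fn; case: ifP => // /nonconstP[g -> ne] [<-]. Qed.

Lemma response_nonconst (s : asg) (F : sys) Y t : compatible s F ->
  response F s Y t = if nonconst_fn F Y is Some f then f t else val s Y.
Proof.
move=> cF; rewrite /nonconst_fn /response.
case: ifP => [/nonconstP[f -> _] // | YF]; case eF: (fn F Y) => [f|] //.
rewrite (compatibleE cF eF); apply/eqP; apply: contraFT YF => ne.
by apply/nonconstP; exists f => //; exists t, s.
Qed.

Lemma response_equiv (s : asg) (F G : sys) Y t :
  compatible s F -> compatible s G -> sys_equiv F G ->
  response F s Y t = response G s Y t.
Proof.
rewrite sys_equivE => cF cG /andP[/eqP nFG /forall_inP sim].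
rewrite !response_nonconst // /nonconst_fn -nFG; case: ifP => // /sim.
rewrite /fn_sim; case: (fn F Y) => [f|] //; case: (fn G Y) => [g|] //.
by move=> /forallP/(_ t)/forallP/(_ t)/implyP/(_ _)/eqP; apply; apply/forall_inP.
Qed.

Lemma sys_equiv_response (s : asg) (F G : sys) : sys_wf F -> sys_wf G ->
  compatible s F -> compatible s G ->
  (forall X w, response F s X w = response G s X w) -> sys_equiv F G.
Proof.
move=> wF wG cF cG FG; apply/sys_equivP => // X.
have FGX w := etrans (esym (response_nonconst X w cF))
  (etrans (FG X w) (response_nonconst X w cG)).
case eF: (nonconst_fn F X) => [f|]; case eG: (nonconst_fn G X) => [g|] //.
- by congr Some; apply/ffunP=> w; have := FGX w; rewrite eF eG.
- have [a [b]] := nonconst_fn_Some eF.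
  by have := FGX a; have := FGX b; rewrite eF eG => -> ->; rewrite eqxx.
- have [a [b]] := nonconst_fn_Some eG.
  by have := FGX a; have := FGX b; rewrite eF eG => <- <-; rewrite eqxx.
Qed.

Lemma interv_eqsE (F : sys) xs s t : interv_eqs F xs s t =
  [forall Y, if Y \in ivars xs then val t Y == ival xs Y (val s Y)
             else val t Y == response F s Y t].
Proof. by apply: eq_forallb => Y; rewrite /response; case: ifP => //; case: (fn F Y). Qed.

Lemma asg_interv_equiv (s : asg) (F G : sys) xs :
  compatible s F -> compatible s G -> sys_equiv F G ->
  asg_interv F xs s = asg_interv G xs s.
Proof.
move=> cF cG FG; rewrite /asg_interv; congr odflt; apply: eq_pick => t.
by rewrite !interv_eqsE; apply: eq_forallb => Y; rewrite (response_equiv _ _ cF cG FG).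
Qed.

Lemma fn_interv (F : sys) xs Y :
  fn (sys_interv F xs) Y = if Y \in ivars xs then None else fn F Y.
Proof. by rewrite /fn ffunE. Qed.

Lemma PA_interv (F : sys) xs Y :
  PA (sys_interv F xs) Y = if Y \in ivars xs then set0 else PA F Y.
Proof. by rewrite /PA ffunE. Qed.

Lemma nonconst_interv (F : sys) xs Y :
  (Y \in nonconst (sys_interv F xs)) = (Y \notin ivars xs) && (Y \in nonconst F).
Proof. by rewrite !inE fn_interv; case: ifP. Qed.

Lemma sys_equiv_interv (F G : sys) xs :
  sys_equiv F G -> sys_equiv (sys_interv F xs) (sys_interv G xs).
Proof.
rewrite !sys_equivE => /andP[/eqP nFG /forall_inP sim]; apply/andP; split.
  by apply/eqP/setP=> Y; rewrite !nonconst_interv nFG.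
apply/forall_inP=> Y; rewrite nonconst_interv => /andP[/negbTE nY /sim].
by rewrite /fn_sim !fn_interv !PA_interv nY.
Qed.

Lemma compatible_interv (s : asg) (F : sys) xs : compatible s F ->
  compatible (asg_interv F xs s) (sys_interv F xs).
Proof.
move=> cF; apply/forallP=> Y; rewrite fn_interv; case: ifP => // nY.
rewrite /asg_interv; case: pickP => [t /forallP /(_ Y) | _] /=; last exact: forallP cF Y.
by rewrite nY; case: (fn F Y).
Qed.

Lemma csat_set1_equiv (phi : form) (s : asg) (F G : sys) :
  compatible s F -> compatible s G -> sys_equiv F G ->
  csat phi [set s] F <-> csat phi [set s] G.
Proof.
elim: phi s F G => [X x|a IH|a IHa b IHb|a IHa b IHb|xs a IH] s F G cF cG FG.
- by [].
- by split=> /= H _ /set1P ->; [rewrite -(IH s F G) | rewrite (IH s F G)] => //;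
    apply: H (set11 s).
- by rewrite /= (IHa s F G) // (IHb s F G).
- rewrite !csat_Or (splits_set1 _ (csat_flat a F) (csat_flat b F)).
  by rewrite (splits_set1 _ (csat_flat a G) (csat_flat b G)) (IHa s F G) // (IHb s F G).
- have cF' := compatible_interv xs cF; have cG' := compatible_interv xs cG.
  rewrite (asg_interv_equiv xs cF cG FG) in cF'.
  rewrite /= !imset_set1 (asg_interv_equiv xs cF cG FG).
  by rewrite (IH _ _ _ cF' cG' (sys_equiv_interv xs FG)).
Qed.

(** * Characteristic formulas *)

Definition others X (w : asg) : seq (V * D) := [seq (Y, val w Y) | Y <- enum V & Y != X].

Lemma ivars_others X w Y : (Y \in ivars (others X w)) = (Y != X).
Proof. by rewrite /ivars -map_comp map_id mem_filter mem_enum andbT. Qed.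

Lemma ival_others X w Y d : Y != X -> ival (others X w) Y d = val w Y.
Proof.
move=> YX; rewrite /ival; set xs := others X w.
have hasY : has (fun p : V * D => p.1 == Y) xs.
  apply/hasP; exists (Y, val w Y) => //.
  by apply/mapP; exists Y; rewrite // mem_filter YX mem_enum.
have := nth_find (Y, d) hasY.
have /mapP[Z _ ->] : nth (Y, d) xs (find (fun p : V * D => p.1 == Y) xs) \in xs.
  by rewrite mem_nth // -has_find.
by move=> /eqP /= ->.
Qed.

Lemma consistent_others X w : consistent (others X w).
Proof.
apply/allP=> _ /mapP[Y _ ->]; apply/allP=> _ /mapP[Z _ ->] /=.
by apply/implyP=> /eqP ->.
Qed.

(* [X] is not among its own parents, so its mechanism only reads the values fixed by
   the intervention. *)
Lemma asg_interv_others (G : sys) (t w : asg) X : sys_wf G ->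
  val (asg_interv G (others X w) t) X = response G t X w.
Proof.
move=> wG.
have agree (u : asg) : (forall Y, Y != X -> val u Y = val w Y) ->
    response G t X u = response G t X w.
  by move=> uw; apply: response_local => // Y /(PA_neq wG) YX; apply: uw.
rewrite /asg_interv; case: pickP => [v | none].
  rewrite interv_eqsE => /forallP eqs.
  have := eqs X; rewrite ivars_others eqxx => /eqP ->; apply: agree => Y YX.
  by have := eqs Y; rewrite ivars_others YX ival_others // => /eqP.
pose f := [ffun Y => if Y == X then response G t X w else val w Y].
have fRan : [forall Y, f Y \in Ran Y].
  by apply/forallP=> Y; rewrite ffunE; case: eqP => [->|_]; rewrite ?response_Ran ?asg_Ran.
have uE Y : val (insubd w f) Y = if Y == X then response G t X w else val w Y.
  by rewrite insubdK // ffunE.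
have := none (insubd w f); rewrite interv_eqsE => /forallP[] Y.
rewrite ivars_others !uE; case: eqP => [-> | /eqP YX] /=; last by rewrite ival_others.
by rewrite (agree _) // => Z ZX; rewrite uE (negbTE ZX).
Qed.

(* [wff] forbids empty antecedents, and [others X w] is empty when [X] is the only
   variable. *)
Definition cf (xs : seq (V * D)) (a : form) : form := if xs is [::] then a else Cf xs a.

Lemma csat_cf_others (G : sys) (t w : asg) X c : sys_wf G -> compatible t G ->
  csat (cf (others X w) (Atom X c)) [set t] G <-> response G t X w = c.
Proof.
move=> wG cG; rewrite /cf; case E: (others X w) => [|p l].
  have onlyX Y : Y = X.
    apply/eqP; apply: contraT => YX.
    by have := map_f (fun Y => (Y, val w Y)) (_ : Y \in [seq Y <- enum V | Y != X]);
      rewrite -/(others X w) E mem_filter YX mem_enum => /(_ isT).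
  have -> : response G t X w = val t X.
    rewrite -(response_self X cG); apply: response_local => // Y /(PA_neq wG).
    by rewrite (onlyX Y) eqxx.
  by split=> [/(_ t (set11 t)) | <- _ /set1P ->].
rewrite -E /= imset_set1 consistent_others /=.
split=> [[//| /(_ _ (set11 _))] | <-]; first by rewrite asg_interv_others.
by right=> _ /set1P ->; rewrite asg_interv_others.
Qed.

Lemma wff_cf_others X w c : c \in Ran X -> wff Ran (cf (others X w) (Atom X c)).
Proof.
move=> cR; rewrite /cf; case E: (others X w) => [|p l] //=; rewrite cR andbT.
have : all (fun q : V * D => q.2 \in Ran q.1) (others X w).
  by apply/allP=> _ /mapP[Y _ ->]; apply: asg_Ran.
by rewrite E.
Qed.

Definition bigAnd (I : Type) (l : seq I) (f : I -> form) (b : form) : form :=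
  foldr (fun x => And (f x)) b l.

Definition bigOr (I : Type) (l : seq I) (f : I -> form) (b : form) : form :=
  foldr (fun x => Or (f x)) b l.

Lemma csat_bigAnd (I : eqType) (l : seq I) f b T (F : sys) :
  csat (bigAnd l f b) T F <-> csat b T F /\ {in l, forall x, csat (f x) T F}.
Proof.
elim: l => [|x l IH] /=; first by split=> [|[]].
rewrite IH; split=> [[fx [Hb Hl]] | [Hb Hl]].
  by split=> // y /predU1P[-> | /Hl].
by split; [apply: Hl; rewrite mem_head | split=> // y yl; apply: Hl; rewrite inE yl orbT].
Qed.

Lemma csat_bigOr1 (I : eqType) (l : seq I) f b (t : asg) (F : sys) :
  csat (bigOr l f b) [set t] F <->
  csat b [set t] F \/ exists2 x, x \in l & csat (f x) [set t] F.
Proof.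
elim: l => [|x l IH]; first by split=> [|[|[]]]; [left | |].
rewrite [bigOr _ _ _]/= csat_Or (splits_set1 _ (csat_flat _ F) (csat_flat _ F)) IH.
split=> [[fx | [Hb | [y yl fy]]] | [Hb | [y /predU1P[-> | yl] fy]]]; try tauto.
- by right; exists x; rewrite ?mem_head.
- by right; exists y; rewrite // inE yl orbT.
- by right; right; exists y.
Qed.

Lemma wff_bigAnd (I : eqType) (l : seq I) f b :
  wff Ran b -> {in l, forall x, wff Ran (f x)} -> wff Ran (bigAnd l f b).
Proof.
move=> wb; elim: l => [|x l IH] //= wl.
by rewrite wl ?mem_head // IH // => y yl; rewrite wl // inE yl orbT.
Qed.

Lemma wff_bigOr (I : eqType) (l : seq I) f b :
  wff Ran b -> {in l, forall x, wff Ran (f x)} -> wff Ran (bigOr l f b).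
Proof.
move=> wb; elim: l => [|x l IH] //= wl.
by rewrite wl ?mem_head // IH // => y yl; rewrite wl // inE yl orbT.
Qed.

Variables (X0 : V) (x0 : D).
Hypothesis x0_Ran : x0 \in Ran X0.

Definition chi (s : asg) (F : sys) : form :=
  bigAnd (enum V) (fun X => And (Atom X (val s X))
    (bigAnd (enum {: asg}) (fun w => cf (others X w) (Atom X (response F s X w)))
      (Atom X (val s X))))
    (Atom X0 (val s X0)).

Lemma wff_chi (s : asg) (F : sys) : sys_wf F -> wff Ran (chi s F).
Proof.
move=> wF; apply: wff_bigAnd => [|X _]; rewrite /= asg_Ran //=.
apply: wff_bigAnd => [|w _]; [exact: asg_Ran | exact/wff_cf_others/response_Ran].
Qed.

Lemma csat_chi (s t : asg) (F G : sys) : sys_wf F -> compatible s F ->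
  sys_wf G -> compatible t G -> csat (chi s F) [set t] G <-> t = s /\ sys_equiv F G.
Proof.
move=> wF cF wG cG; rewrite csat_bigAnd; split=> [[_ chiX] | [ts FG]]; last subst t.
  have ts : t = s.
    by apply/val_inj/ffunP=> X; have [/(_ t (set11 t))] := chiX X (mem_enum _ X).
  split=> //; subst t; apply: (sys_equiv_response wF wG cF cG) => X w.
  have [_ /csat_bigAnd[_ /(_ w (mem_enum _ w))]] := chiX X (mem_enum _ X).
  by rewrite csat_cf_others.
split=> [_ /set1P -> // | X _]; split=> [_ /set1P -> // |].
apply/csat_bigAnd; split=> [_ /set1P -> // | w _].
by rewrite csat_cf_others // (response_equiv _ _ cF cG FG).
Qed.

Definition Bot : form := And (Atom X0 x0) (Neg (Atom X0 x0)).

Lemma csat_Bot1 (t : asg) (G : sys) : ~ csat Bot [set t] G.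
Proof. by case=> Ht /(_ t (set11 t)); apply. Qed.

Lemma equiv_closed_definable (P : asg -> sys -> Prop) :
  (forall s F G, sys_wf F -> sys_wf G -> compatible s F -> compatible s G ->
     sys_equiv F G -> P s F -> P s G) ->
  exists phi, wff Ran phi /\
    forall t G, sys_wf G -> compatible t G -> P t G <-> csat phi [set t] G.
Proof.
move=> closedP.
pose good (p : asg * sys) := [/\ sys_wf p.2, compatible p.1 p.2 & P p.1 p.2].
pose L := [seq p <- enum {: asg * sys} | `[< good p >]].
have memL p : p \in L <-> good p.
  by rewrite mem_filter mem_enum andbT; split=> /asboolP.
exists (bigOr L (fun p => chi p.1 p.2) Bot); split.
  by apply: wff_bigOr => [|p /memL[wF _ _]]; rewrite ?wff_chi //= x0_Ran.
move=> t G wG cG; rewrite csat_bigOr1; split=> [Pt | [/csat_Bot1 [] | [[s F] /memL]]].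
  by right; exists (t, G); [apply/memL | apply/csat_chi; rewrite ?sys_equiv_refl].
by case=> /= wF cF PsF /csat_chi[] // ts FG; subst t; apply: (closedP s F).
Qed.

(** * Definable classes *)

Lemma cteam_wf1 (s : asg) (F : sys) : sys_wf F -> compatible s F -> cteam_wf [set s] F.
Proof. by split=> // _ /set1P ->. Qed.

Lemma cteam_wf_sub1 (T : {set asg}) (F : sys) s :
  cteam_wf T F -> s \in T -> cteam_wf [set s] F.
Proof. by case=> wF cF /cF; apply: cteam_wf1. Qed.

Lemma gteam_wf_sub1 (T : {set asg * sys}) p : gteam_wf T -> p \in T -> gteam_wf [set p].
Proof. by move=> wT pT _ /set1P ->; apply: wT. Qed.

Lemma proj_restr_set1 (s : asg) (F H : sys) :
  proj (restr [set (s, F)] H) = if sys_equiv F H then [set s] else set0.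
Proof.
have -> : restr [set (s, F)] H = if sys_equiv F H then [set (s, F)] else set0.
  apply/setP=> p; rewrite !inE.
  by case: ifP; rewrite ?inE ?andbT ?andbF //; case: eqP => // ->.
by rewrite /proj; case: ifP; rewrite ?imset_set1 ?imset0.
Qed.

Lemma gequiv_set1 (s : asg) (F G : sys) : sys_wf F -> sys_wf G -> sys_equiv F G ->
  gequiv [set (s, F)] [set (s, G)].
Proof.
by move=> wF wG FG H wH; rewrite !proj_restr_set1 (sys_equiv_transl wF wG wH FG).
Qed.

Lemma gequiv_mem (T S : {set asg * sys}) (s : asg) (G : sys) :
  gequiv T S -> sys_wf G -> (s, G) \in S -> exists2 F, (s, F) \in T & sys_equiv F G.
Proof.
move=> TS wG sGS; have : s \in proj (restr S G).
  by apply/imsetP; exists (s, G); rewrite // inE sGS sys_equiv_refl.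
by rewrite -TS // => /imsetP[[s' F]]; rewrite inE => /andP[sFT FG] /= ->; exists F.
Qed.

Lemma cdefinable_flat_closed (phi : form) (K : {set asg} -> sys -> Prop) :
  (forall T F, cteam_wf T F -> K T F <-> csat phi T F) -> cflat K /\ cclosed K.
Proof.
move=> Kphi; split=> [T F wT | T F S G wT wS _ _ FG TS /(Kphi _ _ wT) /csat_flat KT].
  rewrite Kphi // csat_flat; apply: forall_in_iff => s sT.
  by rewrite (Kphi _ _ (cteam_wf_sub1 wT sT)).
subst S; apply/(Kphi _ _ wS)/csat_flat => s sT; have [_ cF] := wT; have [_ cG] := wS.
by rewrite -(csat_set1_equiv phi (cF s sT) (cG s sT) FG); apply: KT.
Qed.

Lemma gdefinable_flat_closed (phi : form) (K : {set asg * sys} -> Prop) :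
  (forall T, gteam_wf T -> K T <-> gsat phi T) -> gflat K /\ gclosed K.
Proof.
move=> Kphi; split=> [T wT | T S wT wS TS /(Kphi _ wT) /gsat_flat KT].
  rewrite Kphi // gsat_flat; apply: forall_in_iff => p pT.
  by rewrite (Kphi _ (gteam_wf_sub1 wT pT)).
apply/(Kphi _ wS)/gsat_flat => -[s G] sGS; have [wG cG] := wS _ sGS.
have [F sFT FG] := gequiv_mem TS wG sGS; have [_ cF] := wT _ sFT.
by rewrite gsat_set1 -(csat_set1_equiv phi cF cG FG) -gsat_set1; apply: KT.
Qed.

Lemma cflat_closed_definable (K : {set asg} -> sys -> Prop) : cflat K -> cclosed K ->
  exists phi, wff Ran phi /\ forall T F, cteam_wf T F -> K T F <-> csat phi T F.
Proof.
move=> Kflat Kclosed.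
have [phi [wphi Kphi]] : exists phi, wff Ran phi /\ forall s F, sys_wf F ->
    compatible s F -> K [set s] F <-> csat phi [set s] F.
  apply: (equiv_closed_definable (P := fun s F => K [set s] F)) => s F G wF wG cF cG FG.
  by apply: (Kclosed _ _ _ _ (cteam_wf1 wF cF) (cteam_wf1 wG cG)) => //;
    apply/set0Pn; exists s; rewrite set11.
exists phi; split=> // T F [wF cF]; rewrite Kflat // csat_flat.
by apply: forall_in_iff => s sT; rewrite (Kphi _ _ wF (cF s sT)).
Qed.

Lemma gflat_closed_definable (K : {set asg * sys} -> Prop) : gflat K -> gclosed K ->
  exists phi, wff Ran phi /\ forall T, gteam_wf T -> K T <-> gsat phi T.
Proof.
move=> Kflat Kclosed.
have [phi [wphi Kphi]] : exists phi, wff Ran phi /\ forall s F, sys_wf F ->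
    compatible s F -> K [set (s, F)] <-> csat phi [set s] F.
  apply: (equiv_closed_definable (P := fun s F => K [set (s, F)])).
  move=> s F G wF wG cF cG FG.
  by apply: Kclosed (gequiv_set1 s wF wG FG); move=> _ /set1P ->.
exists phi; split=> // T wT; rewrite Kflat // gsat_flat.
by apply: forall_in_iff => -[s F] sFT; have [wF cF] := wT _ sFT; rewrite gsat_set1 Kphi.
Qed.

End Definability.

Theorem theorem4p4 (V D : finType) (Ran : V -> {set D})
  (hDom : 0 < #|V|) (hRan : forall X : V, Ran X != set0) :
  (forall K : {set assignment Ran} -> sysraw Ran -> Prop,
     cclass K -> (exists T F, K T F) ->
     ((exists phi : formula V D, wff Ran phi /\
         forall T F, cteam_wf T F -> (K T F <-> csat phi T F))
      <-> cflat K /\ cclosed K)) /\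
  (forall K : {set (assignment Ran * sysraw Ran)} -> Prop,
     gclass K -> (exists T, K T) ->
     ((exists phi : formula V D, wff Ran phi /\
         forall T, gteam_wf T -> (K T <-> gsat phi T))
      <-> gflat K /\ gclosed K)).
Proof.
have [X0 _] := card_gt0P hDom; have [x0 x0_Ran] := set0Pn _ (hRan X0).
split=> K _ _; split=> [[phi [_ Kphi]] | [Kflat Kclosed]].
- exact: cdefinable_flat_closed Kphi.
- exact: cflat_closed_definable x0_Ran K Kflat Kclosed.
- exact: gdefinable_flat_closed Kphi.
- exact: gflat_closed_definable x0_Ran K Kflat Kclosed.
Qed.
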